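(* Let $l:G\to\Lambda$ be a complete $\delta$-hyperbolic length function on a group $G$ ($\delta\in\Lambda$, $\delta\geqslant0$). Let $A=\ker(l)=\{g: l(g)=0\}$, $X_l=G/A$ (left cosets) and $d_l(gA,hA)=l(g^{-1}h)$. Then the $\delta$-hyperbolic $\Lambda$-metric space $(X_l,d_l)$ is quasi-geodesic.
   Context: $\Lambda$ is an ordered abelian group with ordered divisible hull $\Lambda_{\mathbb{Q}}\supseteq\Lambda$. A length function on $G$ is $l:G\to\Lambda$ with $l(g)\geqslant0$, $l(1)=0$, $l(g)=l(g^{-1})$, $l(gh)\leqslant l(g)+l(h)$; $d_l$ is then a well-defined $\Lambda$-metric. Let $c(g,h)=\tfrac12(l(g)+l(h)-l(g^{-1}h))\in\Lambda_{\mathbb{Q}}$; $l$ is $\delta$-hyperbolic if $c(f,g)\geqslant\min\{c(f,h),c(g,h)\}-\delta$ for all $f,g,h$. Write $g=u\circ g_1$ if $g=ug_1$ and $l(g)=l(u)+l(g_1)$. $l$ is complete if for every $g\in G$ and every $\alpha\in\Lambda$ with $0\leqslant\alpha\leqslant l(g)$ there exist $u,g_1$ with $g=u\circ g_1$ and $l(u)=\alpha$. A $\Lambda$-metric space $(X,d)$ is quasi-geodesic if there is a constant $C\in\Lambda$, $C\geqslant0$, such that for all $x,y\in X$ there is a map $\gamma:\{t\in\Lambda:0\leqslant t\leqslant d(x,y)\}\to X$ with $\gamma(0)=x$, $\gamma(d(x,y))=y$ and $\beta-\alpha\leqslant d(\gamma(\alpha),\gamma(\beta))\leqslant\beta-\alpha+C$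 whenever $0\leqslant\alpha\leqslant\beta\leqslant d(x,y)$. *)

From HB Require Import structures.
From mathcomp Require Import all_boot all_order all_algebra.
From Stdlib Require Import ClassicalEpsilon.
Set Implicit Arguments. Unset Strict Implicit. Unset Printing Implicit Defensive.
Import Order.TTheory GRing.Theory Num.Theory.
Local Open Scope ring_scope.

Definition ordered_abelian_group (L : porderZmodType) : Prop :=
  total (@Order.le ring_display L) /\
  (forall x y z : L, x <= y -> x + z <= y + z).

Definition length_function (G : groupType) (L : porderZmodType) (l : G -> L) : Prop :=
  [/\ (forall g, 0 <= l g),
      l 1%g = 0,
      (forall g, l (g^-1)%g = l g) &
      (forall g h, l (g * h)%g <= l g + l h)].

(* Twice the Gromov product: 2 c(g,h) = l(g) + l(h) - l(g^-1 h), an element of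
   Lambda (c itself lives in the divisible hull Lambda_Q). *)
Definition gromov2 (G : groupType) (L : porderZmodType) (l : G -> L) (g h : G) : L :=
  l g + l h - l (g^-1 * h)%g.

(* l is delta-hyperbolic: c(f,g) >= min(c(f,h), c(g,h)) - delta, stated after
   multiplying by 2 (an order-isomorphism of Lambda_Q), so that it lives in Lambda. *)
Definition hyperbolic_length (G : groupType) (L : porderZmodType) (l : G -> L) (delta : L) : Prop :=
  forall f g h : G,
    Order.min (gromov2 l f h) (gromov2 l g h) - delta *+ 2 <= gromov2 l f g.

Definition complete_length (G : groupType) (L : porderZmodType) (l : G -> L) : Prop :=
  forall (g : G) (alpha : L), 0 <= alpha -> alpha <= l g ->
    exists u g1 : G, [/\ g = (u * g1)%g, l g = l u + l g1 & l u = alpha].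

Definition ker_length (G : groupType) (L : porderZmodType) (l : G -> L) : G -> Prop :=
  fun a => l a = 0.

Definition lcoset_of (G : groupType) (L : porderZmodType) (l : G -> L) (g : G) : G -> Prop :=
  fun x => exists a, ker_length l a /\ x = (g * a)%g.

Definition coset_space (G : groupType) (L : porderZmodType) (l : G -> L) : Type :=
  { S : G -> Prop | exists g : G, S = lcoset_of l g }.

Definition coset_rep (G : groupType) (L : porderZmodType) (l : G -> L)
  (S : coset_space l) : G :=
  proj1_sig (constructive_indefinite_description _ (proj2_sig S)).

Definition coset_dist (G : groupType) (L : porderZmodType) (l : G -> L)
  (S T : coset_space l) : L :=
  l ((coset_rep S)^-1 * coset_rep T)%g.

(* A Lambda-metric space (X,d) is quasi-geodesic.  The map gamma is given as a
   total function on Lambda; only its values on [0, d(x,y)] are constrained. *)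
Definition quasi_geodesic (X : Type) (L : porderZmodType) (d : X -> X -> L) : Prop :=
  exists C : L, 0 <= C /\
    forall x y : X, exists gamma : L -> X,
      [/\ gamma 0 = x, gamma (d x y) = y &
          forall a b : L, 0 <= a -> a <= b -> b <= d x y ->
            b - a <= d (gamma a) (gamma b) /\ d (gamma a) (gamma b) <= b - a + C].

From HB Require Import structures.
From mathcomp Require Import all_boot all_order all_algebra.
From Stdlib Require Import ClassicalEpsilon ProofIrrelevance
  FunctionalExtensionality PropExtensionality.
Import Order.TTheory GRing.Theory Num.Theory.
Set Implicit Arguments. Unset Strict Implicit.
Local Open Scope ring_scope.

(* Fix cosets x = gA, y = hA and put f = g^-1 h, so d_l(x, y) = l(f).  Call u a
   prefix of f when l(f) = l(u) + l(u^-1 f).  Completeness yields, for every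
   alpha in [0, l(f)], a prefix u_alpha of f of length alpha, and the path is
   gamma(alpha) = g u_alpha A.  Its distances are d_l(gamma a, gamma b) =
   l(u_a^-1 u_b); the triangle inequality bounds this below by b - a, and
   hyperbolicity applied to the triple (u_a, u_b, f) -- where the Gromov
   products with f equal 2a and 2b -- bounds it above by b - a + 2 delta. *)

Section TranslationInvariantOrder.
Variable L : porderZmodType.
Hypothesis lerD2r : forall x y z : L, x <= y -> x + z <= y + z.

Lemma lerD (x y z w : L) : x <= y -> z <= w -> x + z <= y + w.
Proof.
move=> le_xy le_zw; apply: le_trans (lerD2r z le_xy) _.
by rewrite ![y + _]addrC; apply: lerD2r.
Qed.

Lemma ler_subl_addl (x y z : L) : x <= z + y -> x - z <= y.
Proof. by move=> /(lerD2r (- z)); rewrite [z + y]addrC addrK. Qed.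

(* The rearrangement used to read off the upper bound from hyperbolicity. *)
Lemma ler_sub_swap (a b c d : L) : a - d <= b - c -> c <= b - a + d.
Proof.
move=> /(lerD2r (c - a + d)).
have -> : a - d + (c - a + d) = c by rewrite addrACA addNr addr0 addrC subrK.
by rewrite !addrA subrK.
Qed.

Lemma mulrn2_ge0 (x : L) : 0 <= x -> 0 <= x *+ 2.
Proof. by move=> x_ge0; rewrite mulr2n -[0]addr0; apply: lerD. Qed.

End TranslationInvariantOrder.

Section KernelAndCosets.
Variables (L : porderZmodType) (G : groupType) (l : G -> L).
Hypothesis l_length : length_function l.

Lemma length_ge0 (g : G) : 0 <= l g.
Proof. by case: l_length. Qed.

Lemma length_triangle (g h : G) : l (g * h)%g <= l g + l h.
Proof. by case: l_length. Qed.

Lemma ker_inv (k : G) : l k = 0 -> l (k^-1)%g = 0.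
Proof. by case: l_length => _ _ l_inv _ l_k; rewrite l_inv. Qed.

Lemma ker_mul (a b : G) : l a = 0 -> l b = 0 -> l (a * b)%g = 0.
Proof.
move=> l_a l_b; apply/le_anti; rewrite length_ge0 andbT.
by apply: le_trans (length_triangle _ _) _; rewrite l_a l_b addr0.
Qed.

(* The length is invariant under multiplication by kernel elements on either
   side; this makes d_l independent of the chosen representatives. *)
Lemma length_ker_mul (p w q : G) : l p = 0 -> l q = 0 -> l (p * w * q)%g = l w.
Proof.
have bound (p' w' q' : G) : l p' = 0 -> l q' = 0 -> l (p' * w' * q')%g <= l w'.
  move=> l_p l_q; apply: le_trans (length_triangle _ _) _; rewrite l_q addr0.
  by apply: le_trans (length_triangle _ _) _; rewrite l_p add0r.
move=> l_p l_q; apply/le_anti; rewrite bound //=.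
have unfold_w : (p^-1 * (p * w * q) * q^-1)%g = w.
  by rewrite -!monoid.mulgA monoid.mulgV monoid.mulg1 monoid.mulKg.
by rewrite -{1}unfold_w bound ?ker_inv.
Qed.

Definition coset (g : G) : coset_space l :=
  exist _ (lcoset_of l g) (ex_intro _ g erefl).

Lemma coset_repK (S : coset_space l) : coset (coset_rep S) = S.
Proof.
case: S => S S_coset; apply: eq_sig_hprop => [P p q|/=].
  exact: proof_irrelevance.
by rewrite /coset_rep /=; case: constructive_indefinite_description.
Qed.

Lemma coset_rep_coset (g : G) :
  exists k, l k = 0 /\ coset_rep (coset g) = (g * k)%g.
Proof.
rewrite /coset_rep /=; case: constructive_indefinite_description => g' e /=.
have : lcoset_of l g' g' by exists 1%g; rewrite monoid.mulg1; case: l_length.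
by rewrite -e => -[k [l_k ->]]; exists k.
Qed.

Lemma coset_ker (g k : G) : l k = 0 -> coset (g * k)%g = coset g.
Proof.
move=> l_k; apply: eq_sig_hprop => [P p q|/=]; first exact: proof_irrelevance.
apply: functional_extensionality => x; apply: propositional_extensionality.
split=> -[a [l_a ->]].
  by exists (k * a)%g; split; [exact: ker_mul | rewrite monoid.mulgA].
exists (k^-1 * a)%g; split; first by apply: ker_mul; rewrite ?ker_inv.
by rewrite -monoid.mulgA monoid.mulVKg.
Qed.

Lemma coset_dist_coset (g h : G) : coset_dist (coset g) (coset h) = l (g^-1 * h)%g.
Proof.
rewrite /coset_dist.
have [k [l_k ->]] := coset_rep_coset g; have [k' [l_k' ->]] := coset_rep_coset h.
rewrite -(length_ker_mul (g^-1 * h) (ker_inv l_k) l_k'); congr (l _).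
by rewrite monoid.invgM !monoid.mulgA.
Qed.

End KernelAndCosets.

Section Prefixes.
Variables (L : porderZmodType) (G : groupType) (l : G -> L) (delta : L).
Hypothesis lerD2r : forall x y z : L, x <= y -> x + z <= y + z.
Hypothesis l_length : length_function l.
Hypothesis l_hyp : hyperbolic_length l delta.

(* u is a prefix of f, i.e. f = u o (u^-1 f) without cancellation. *)
Definition prefix_of (f u : G) : Prop := l f = l u + l (u^-1 * f)%g.

Lemma gromov2_prefix (f u : G) : prefix_of f u -> gromov2 l u f = l u *+ 2.
Proof. by move=> pre_u; rewrite /gromov2 {1}pre_u addrA addrK mulr2n. Qed.

Lemma prefix_dist_bounds (f u u' : G) :
  prefix_of f u -> prefix_of f u' -> l u <= l u' ->
  l u' - l u <= l (u^-1 * u')%g /\ l (u^-1 * u')%g <= l u' - l u + delta *+ 2.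
Proof.
move=> pre_u pre_u' le_uu'; split.
  apply: ler_subl_addl => //; rewrite -{1}(monoid.mulVKg u u').
  exact: length_triangle.
have := l_hyp u u' f.
rewrite (gromov2_prefix pre_u) (gromov2_prefix pre_u') min_l; last exact: lerD.
move=> /(@ler_sub_swap _ lerD2r (l u *+ 2) _ _ (delta *+ 2)).
suff -> : l u + l u' - l u *+ 2 = l u' - l u by [].
by rewrite mulr2n opprD addrACA subrr add0r.
Qed.

Lemma prefix_choice (f : G) : complete_length l ->
  exists pre : L -> G, forall a, 0 <= a -> a <= l f ->
    prefix_of f (pre a) /\ l (pre a) = a.
Proof.
move=> l_complete; pose P a u := 0 <= a -> a <= l f -> prefix_of f u /\ l u = a.
exists (fun a => epsilon (inhabits 1%g) (P a)) => a a_ge0 a_le.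
apply: (epsilon_spec _ (P a)) => //.
have [u [v [f_uv l_f l_u]]] := l_complete f a a_ge0 a_le.
by exists u => _ _; rewrite /prefix_of f_uv monoid.mulKg -f_uv.
Qed.

Lemma prefix_full (f u : G) : prefix_of f u -> l u = l f -> l (u^-1 * f)%g = 0.
Proof. by move=> pre_u l_u; apply: (addrI (l u)); rewrite addr0 -pre_u l_u. Qed.

End Prefixes.

Theorem mainTheorem15 (L : porderZmodType) (G : groupType) (l : G -> L) (delta : L) :
  ordered_abelian_group L ->
  length_function l ->
  0 <= delta ->
  hyperbolic_length l delta ->
  complete_length l ->
  quasi_geodesic (@coset_dist G L l).
Proof.
move=> [_ lerD2r] l_length delta_ge0 l_hyp l_complete.
exists (delta *+ 2); split; first exact: mulrn2_ge0.
move=> x y; set g := coset_rep x; set f := (g^-1 * coset_rep y)%g.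
have [pre pre_spec] := prefix_choice f l_complete.
exists (fun a => coset l (g * pre a)%g); split.
- have [_ l_pre0] := pre_spec 0 (lexx 0) (length_ge0 l_length f).
  by rewrite (coset_ker l_length _ l_pre0) coset_repK.
- (* the full-length prefix ends in the coset of f, so gamma(l f) = g f A = y *)
  have [pre_f l_pre_f] := pre_spec _ (length_ge0 l_length f) (lexx _).
  rewrite -(coset_ker l_length _ (prefix_full pre_f l_pre_f)) -monoid.mulgA.
  by rewrite monoid.mulVKg monoid.mulVKg coset_repK.
- move=> a b a_ge0 le_ab b_le.
  have [pre_a l_a] := pre_spec a a_ge0 (le_trans le_ab b_le).
  have [pre_b l_b] := pre_spec b (le_trans a_ge0 le_ab) b_le.
  rewrite coset_dist_coset // monoid.invgM -monoid.mulgA monoid.mulKg.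
  have := prefix_dist_bounds lerD2r l_length l_hyp pre_a pre_b.
  by rewrite l_a l_b; apply.
Qed.
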